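(* Let $\mathcal I$ index a finite set of strategies for the iterated Prisoner's Dilemma (payoffs normalized with $T=1$, $S=0$). (a) Suppose the strategy indexed by $i^*$ is a memory-one vector $\mathbf p^{i^*}=(p_1,p_2,0,0)$ with $p_1,p_2<1$, together with any initial play. If for no other $j\in\mathcal I$ is $\mathbf p^j$ firm, then $i^*$ is an ESS for the game $\{A_{ij}\}$. (b) Suppose the strategy indexed by $i^*$ is a memory-one vector $\mathbf p^{i^*}=(1,p_2,0,0)$ with $p_2<1$, together with any initial play. If for no other $j\in\mathcal I$ is $\mathbf p^j$ either agreeable or firm, then $i^*$ is an ESS for the game $\{A_{ij}\}$. (c) Assume $P<\tfrac12$. Suppose the strategy indexed by $i^*$ is a firm, non-exceptional zero-determinant strategy with $\bar\alpha<0$, together with any initial play. If for no other $j\in\mathcal I$ is $\mathbf p^j$ firm, then $i^*$ is an ESS for the game $\{A_{ij}\}$.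
   Context: Iterated Prisoner's Dilemma with normalized payoffs $T=1>R>P>S=0$, $2R>1$; outcomes ordered $cc,cd,dc,dd$ (own play first); payoff vectors $\mathbf S_X=(R,0,1,P)$, $\mathbf S_Y=(R,1,0,P)$, $\mathbf 1=(1,1,1,1)$, $\mathbf e_{23}=(0,1,1,0)$. A memory-one strategy vector is $\mathbf p\in[0,1]^4$, $p_i$ being the probability of playing $c$ after the $i$-th outcome, outcomes labeled from the player's own perspective; it is agreeable if $p_1=1$ and firm if $p_4=0$. A strategy is such a vector together with an initial play. Its X Press-Dyson vector $\mathbf p-(1,1,0,0)$ decomposes uniquely as $\alpha\mathbf S_X+\beta\mathbf S_Y+\gamma\mathbf 1+\delta\mathbf e_{23}$; $\mathbf p$ is a non-exceptional zero-determinant strategy if $\delta=0$ and $\gamma>0$, and then $\bar\alpha=\alpha/\gamma$. For $i,j\in\mathcal I$, $A_{ij}$ is the long-run (Cesàro-limit) average payoff of X when X uses strategy $i$ and Y uses strategy $j$. $i^*$ is an evolutionarily stable strategy (ESS) if $A_{ji^*}<A_{i^*i^*}$ for all $j\ne i^*$. *)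

From Stdlib Require Import Reals List.
From Coquelicot Require Import Coquelicot.
Open Scope R_scope.

(* Outcomes of one round, from a given player's own perspective
   (own play first): cc, cd, dc, dd. *)
Inductive outcome := CC | CD | DC | DD.

Definition swap (o : outcome) : outcome :=
  match o with CD => DC | DC => CD | o => o end.

Definition own_play (o : outcome) : bool :=
  match o with CC | CD => true | _ => false end.
Definition other_play (o : outcome) : bool :=
  match o with CC | DC => true | _ => false end.
Definition mk_outcome (x y : bool) : outcome :=
  match x, y with
  | true, true => CC | true, false => CD | false, true => DC | false, false => DD end.

Definition sum4 (f : outcome -> R) : R := f CC + f CD + f DC + f DD.

(* A memory-one strategy vector p = (p_1,p_2,p_3,p_4), p o = probability of
   playing c after outcome o (own perspective). *)
Definition mem1 := outcome -> R.
Definition valid_mem1 (p : mem1) : Prop := forall o, 0 <= p o <= 1.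

Record strategy := Strat { vec : mem1 ; init : bool }.

Definition agreeable (p : mem1) : Prop := p CC = 1.
Definition firm (p : mem1) : Prop := p DD = 0.

Definition SX (Rr Pp : R) (o : outcome) : R :=
  match o with CC => Rr | CD => 0 | DC => 1 | DD => Pp end.
(* Payoff vector of Y seen in X's outcome labels: S_Y = (R,1,0,P). *)
Definition SY (Rr Pp : R) (o : outcome) : R :=
  match o with CC => Rr | CD => 1 | DC => 0 | DD => Pp end.
Definition one4 (o : outcome) : R := 1.
Definition e23 (o : outcome) : R :=
  match o with CD | DC => 1 | _ => 0 end.

Definition prob_play (b : bool) (pr : R) : R := if b then pr else 1 - pr.

(* Markov chain on outcomes (labelled from X's perspective) when X uses
   vector p and Y uses vector q. *)
Definition trans (p q : mem1) (s t : outcome) : R :=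
  prob_play (own_play t) (p s) * prob_play (other_play t) (q (swap s)).

Fixpoint dist (p q : mem1) (x0 y0 : bool) (n : nat) (t : outcome) : R :=
  match n with
  | O => if (match mk_outcome x0 y0, t with
             | CC, CC | CD, CD | DC, DC | DD, DD => true | _, _ => false end)
         then 1 else 0
  | S m => sum4 (fun s => dist p q x0 y0 m s * trans p q s t)
  end.

Definition round_payoff (Rr Pp : R) (X Y : strategy) (n : nat) : R :=
  sum4 (fun s => dist (vec X) (vec Y) (init X) (init Y) n s * SX Rr Pp s).

Definition cesaro (Rr Pp : R) (X Y : strategy) (n : nat) : R :=
  sum_f_R0 (round_payoff Rr Pp X Y) n / INR (S n).

Definition longrun (Rr Pp : R) (X Y : strategy) : R :=
  real (Lim_seq (cesaro Rr Pp X Y)).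

Definition Amat {I : Type} (Rr Pp : R) (st : I -> strategy) (i j : I) : R :=
  longrun Rr Pp (st i) (st j).

Definition ESS {I : Type} (A : I -> I -> R) (istar : I) : Prop :=
  forall j, j <> istar -> A j istar < A istar istar.

Definition PD_decomp (Rr Pp : R) (p : mem1) (a b g d : R) : Prop :=
  forall o, p o - (match o with CC | CD => 1 | _ => 0 end)
            = a * SX Rr Pp o + b * SY Rr Pp o + g * one4 o + d * e23 o.

(* Non-exceptional ZD strategy (delta = 0, gamma > 0) with alpha-bar < 0. *)
Definition nonexc_ZD_neg_alphabar (Rr Pp : R) (p : mem1) : Prop :=
  exists a b g, PD_decomp Rr Pp p a b g 0 /\ 0 < g /\ a / g < 0.

Definition PD_params (Rr Pp : R) : Prop :=
  0 < Pp /\ Pp < Rr /\ Rr < 1 /\ 2 * Rr > 1.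

Definition finite_index (I : Type) : Prop := exists l : list I, forall i, In i l.

From Pilot Require Import Defs.
From Stdlib Require Import Reals Lra Lia Psatz.
From Coquelicot Require Import Coquelicot.
Open Scope R_scope.

(* Summarize the first n+1 rounds by the expected number of visits to each outcome.
   These occupation numbers obey a few linear constraints, each exact up to a
   boundary term of size 1: the expected number of cooperations of a player is
   forecast by its memory-one vector (the Press-Dyson/Akin identity), and the flow
   along a transition s -> t is bounded by the visits to t.  A resident that never
   cooperates again after its own defection, or a firm ZD strategy with negative
   alpha-bar, earns at least P against itself; a non-firm mutant is driven into dd
   but leaves it towards cd with probability p_4 > 0, so in the long run it earns
   strictly less than P against the resident. *)

Definition dot4 (o f : outcome -> R) : R := sum4 (fun s => o s * f s).

Definition coop_ind (b : bool) : R := if b then 1 else 0.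

Lemma prob_play_bounds b pr : 0 <= pr <= 1 -> 0 <= prob_play b pr <= 1.
Proof. destruct b; simpl; lra. Qed.

Lemma trans_bounds p q s t : valid_mem1 p -> valid_mem1 q -> 0 <= trans p q s t <= 1.
Proof.
  intros Hp Hq; unfold trans.
  destruct (prob_play_bounds (own_play t) (p s) (Hp s)).
  destruct (prob_play_bounds (other_play t) (q (swap s)) (Hq (swap s))).
  nra.
Qed.

Lemma trans_sum p q s : sum4 (trans p q s) = 1.
Proof. unfold sum4, trans; simpl; ring. Qed.

Section Chain.

Variables (p q : mem1) (x0 y0 : bool).
Hypotheses (Hp : valid_mem1 p) (Hq : valid_mem1 q).

Let dist := Defs.dist p q x0 y0.

Lemma dist_nonneg k t : 0 <= dist k t.
Proof.
  revert t; induction k as [|k IH]; intro t.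
  - unfold dist; destruct x0, y0, t; simpl; lra.
  - change (0 <= sum4 (fun s => dist k s * trans p q s t)); unfold sum4.
    pose proof (fun s => trans_bounds p q s t Hp Hq) as Ht.
    pose proof (Ht CC); pose proof (Ht CD); pose proof (Ht DC); pose proof (Ht DD).
    pose proof (IH CC); pose proof (IH CD); pose proof (IH DC); pose proof (IH DD).
    nra.
Qed.

Lemma dist_sum k : sum4 (dist k) = 1.
Proof.
  induction k as [|k IH].
  - unfold dist, sum4; destruct x0, y0; simpl; lra.
  - change (sum4 (fun t => sum4 (fun s => dist k s * trans p q s t)) = 1).
    transitivity (dist k CC * sum4 (trans p q CC) + dist k CD * sum4 (trans p q CD)
                  + dist k DC * sum4 (trans p q DC) + dist k DD * sum4 (trans p q DD)).
    + unfold sum4; ring.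
    + rewrite !trans_sum; unfold sum4 in IH; lra.
Qed.

Lemma dot4_dist_bounds k h : (forall t, 0 <= h t <= 1) -> 0 <= dot4 (dist k) h <= 1.
Proof.
  intro Hh; pose proof (dist_sum k) as Hs; unfold dot4, sum4 in *.
  pose proof (dist_nonneg k CC); pose proof (dist_nonneg k CD).
  pose proof (dist_nonneg k DC); pose proof (dist_nonneg k DD).
  pose proof (Hh CC); pose proof (Hh CD); pose proof (Hh DC); pose proof (Hh DD).
  nra.
Qed.

Lemma dist_le_1 k t : dist k t <= 1.
Proof.
  pose proof (dist_sum k); pose proof (dist_nonneg k CC); pose proof (dist_nonneg k CD).
  pose proof (dist_nonneg k DC); pose proof (dist_nonneg k DD).
  unfold sum4 in *; destruct t; lra.
Qed.

Lemma dist_flow k s t : dist k s * trans p q s t <= dist (S k) t.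
Proof.
  change (dist k s * trans p q s t <= sum4 (fun s => dist k s * trans p q s t)).
  assert (Hterm : forall s, 0 <= dist k s * trans p q s t).
  { intro s'; apply Rmult_le_pos; [apply dist_nonneg | apply trans_bounds; auto]. }
  pose proof (Hterm CC); pose proof (Hterm CD); pose proof (Hterm DC); pose proof (Hterm DD).
  unfold sum4; destruct s; lra.
Qed.

Lemma own_coop_next k :
  dot4 (dist k) p = dot4 (dist (S k)) (fun t => coop_ind (own_play t)).
Proof. unfold dot4, dist; simpl; unfold sum4, trans; simpl; ring. Qed.

Lemma other_coop_next k :
  dot4 (dist k) (fun s => q (swap s)) = dot4 (dist (S k)) (fun t => coop_ind (other_play t)).
Proof. unfold dot4, dist; simpl; unfold sum4, trans; simpl; ring. Qed.

Definition occupation (n : nat) (s : outcome) : R := sum_f_R0 (fun k => dist k s) n.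

Lemma occupation_nonneg n s : 0 <= occupation n s.
Proof. apply cond_pos_sum; intro; apply dist_nonneg. Qed.

Lemma occupation_sum n : sum4 (occupation n) = INR (S n).
Proof.
  induction n as [|n IH].
  - exact (dist_sum 0).
  - rewrite S_INR, <- IH; pose proof (dist_sum (S n)).
    unfold occupation, sum4 in *; simpl; lra.
Qed.

Lemma occupation_balance n (w h : outcome -> R) :
  (forall t, 0 <= h t <= 1) ->
  (forall k, dot4 (dist k) w = dot4 (dist (S k)) h) ->
  Rabs (dot4 (occupation n) (fun s => w s - h s)) <= 1.
Proof.
  intros Hh Hwh.
  assert (Htel : dot4 (occupation n) (fun s => w s - h s)
                 = dot4 (dist (S n)) h - dot4 (dist 0) h).
  { induction n as [|n IH].
    - rewrite <- Hwh; unfold dot4, occupation, sum4; simpl; ring.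
    - pose proof (Hwh (S n)) as E; unfold dot4, occupation, sum4 in *; simpl in *; lra. }
  rewrite Htel; apply Rabs_le.
  pose proof (dot4_dist_bounds (S n) h Hh); pose proof (dot4_dist_bounds 0 h Hh); lra.
Qed.

Lemma occupation_flow n s t : trans p q s t * occupation n s <= occupation n t + 1.
Proof.
  assert (H : trans p q s t * occupation n s <= occupation n t - dist 0 t + dist (S n) t).
  { induction n as [|n IH].
    - pose proof (dist_flow 0 s t); unfold occupation; simpl; lra.
    - pose proof (dist_flow (S n) s t); unfold occupation in *; simpl in *; lra. }
  pose proof (dist_nonneg 0 t); pose proof (dist_le_1 (S n) t); lra.
Qed.

End Chain.

(* [o] plays the role of the expected visit counts of the outcomes among the
   first [N] rounds, as produced by [occupation]. *)
Definition occupation_constraints (p q : mem1) (o : outcome -> R) (N : R) : Prop :=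
  (forall s, 0 <= o s) /\ sum4 o = N /\
  Rabs (dot4 o (fun s => p s - coop_ind (own_play s))) <= 1 /\
  Rabs (dot4 o (fun s => q (swap s) - coop_ind (other_play s))) <= 1 /\
  (forall s t, trans p q s t * o s <= o t + 1).

Lemma occupation_constraints_hold p q x0 y0 n : valid_mem1 p -> valid_mem1 q ->
  occupation_constraints p q (occupation p q x0 y0 n) (INR (S n)).
Proof.
  intros Hp Hq; repeat split.
  - apply occupation_nonneg; auto.
  - apply occupation_sum; auto.
  - apply occupation_balance; auto.
    + intros []; simpl; lra.
    + apply own_coop_next.
  - apply occupation_balance; auto.
    + intros []; simpl; lra.
    + apply other_coop_next.
  - intros; apply occupation_flow; auto.
Qed.

Lemma cesaro_occupation Rr Pp X Y n :
  cesaro Rr Pp X Y n * INR (S n)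
  = dot4 (occupation (vec X) (vec Y) (init X) (init Y) n) (SX Rr Pp).
Proof.
  assert (Hsum : sum_f_R0 (round_payoff Rr Pp X Y) n
                 = dot4 (occupation (vec X) (vec Y) (init X) (init Y) n) (SX Rr Pp)).
  { induction n as [|n IH]; unfold round_payoff, dot4, occupation, sum4 in *; simpl in *;
      [ring | rewrite IH; ring]. }
  unfold cesaro; rewrite Hsum; field; apply not_0_INR; discriminate.
Qed.

Lemma is_lim_seq_plus_div_S (L K : R) : is_lim_seq (fun n => L + K / INR (S n)) L.
Proof.
  assert (Hinv : is_lim_seq (fun n => / INR (S n)) 0).
  { apply (is_lim_seq_incr_1 (fun n => / INR n)).
    replace (Finite 0) with (Rbar_inv p_infty) by reflexivity.
    apply is_lim_seq_inv; [apply is_lim_seq_INR | discriminate]. }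
  pose proof (is_lim_seq_plus' _ _ L (K * 0) (is_lim_seq_const L)
                (is_lim_seq_scal_l _ K 0 Hinv)) as H.
  rewrite Rmult_0_r, Rplus_0_r in H; exact H.
Qed.

Lemma Lim_seq_finite_between (u : nat -> R) m M :
  (forall n, m <= u n <= M) -> Lim_seq u = Finite (real (Lim_seq u)).
Proof.
  intro Hu.
  assert (Hm : Rbar_le m (Lim_seq u)).
  { rewrite <- (Lim_seq_const m); apply Lim_seq_le_loc; exists O; intros; apply Hu. }
  assert (HM : Rbar_le (Lim_seq u) M).
  { rewrite <- (Lim_seq_const M); apply Lim_seq_le_loc; exists O; intros; apply Hu. }
  destruct (Lim_seq u); simpl in *; easy.
Qed.

Lemma real_Lim_seq_le_plus_div_S (u : nat -> R) m M L K :
  (forall n, m <= u n <= M) -> (forall n, u n <= L + K / INR (S n)) ->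
  real (Lim_seq u) <= L.
Proof.
  intros Hb Hu.
  assert (H : Rbar_le (Lim_seq u) (Lim_seq (fun n => L + K / INR (S n)))).
  { apply Lim_seq_le_loc; exists O; intros; apply Hu. }
  rewrite (is_lim_seq_unique _ _ (is_lim_seq_plus_div_S L K)),
          (Lim_seq_finite_between u m M Hb) in H.
  exact H.
Qed.

Lemma real_Lim_seq_ge_plus_div_S (u : nat -> R) m M L K :
  (forall n, m <= u n <= M) -> (forall n, L + K / INR (S n) <= u n) ->
  L <= real (Lim_seq u).
Proof.
  intros Hb Hu.
  assert (H : Rbar_le (Lim_seq (fun n => L + K / INR (S n))) (Lim_seq u)).
  { apply Lim_seq_le_loc; exists O; intros; apply Hu. }
  rewrite (is_lim_seq_unique _ _ (is_lim_seq_plus_div_S L K)),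
          (Lim_seq_finite_between u m M Hb) in H.
  exact H.
Qed.

Section Longrun.

Variables (Rr Pp : R) (X Y : strategy).
Hypotheses (HPD : PD_params Rr Pp) (HX : valid_mem1 (vec X)) (HY : valid_mem1 (vec Y)).

Lemma cesaro_bounds n : 0 <= cesaro Rr Pp X Y n <= 1.
Proof.
  destruct HPD as (P1 & P2 & P3 & P4).
  assert (HN : 0 < INR (S n)) by (apply lt_0_INR; lia).
  destruct (occupation_constraints_hold _ _ (init X) (init Y) n HX HY) as (Ho & Hs & _).
  pose proof (cesaro_occupation Rr Pp X Y n) as E.
  set (o := occupation _ _ _ _ n) in *; unfold dot4, sum4 in *; cbn [SX] in E.
  pose proof (Ho CC); pose proof (Ho CD); pose proof (Ho DC); pose proof (Ho DD).
  split; apply Rmult_le_reg_r with (INR (S n)); [exact HN | nra | exact HN | nra].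
Qed.

Lemma longrun_le_of_occupation L K :
  (forall o N, occupation_constraints (vec X) (vec Y) o N -> dot4 o (SX Rr Pp) <= L * N + K) ->
  longrun Rr Pp X Y <= L.
Proof.
  intro Hbound; apply (real_Lim_seq_le_plus_div_S _ 0 1 L K cesaro_bounds); intro n.
  assert (HN : 0 < INR (S n)) by (apply lt_0_INR; lia).
  pose proof (Hbound _ _ (occupation_constraints_hold _ _ (init X) (init Y) n HX HY)) as H.
  rewrite <- cesaro_occupation in H.
  apply Rmult_le_reg_r with (INR (S n)); [exact HN|].
  replace ((L + K / INR (S n)) * INR (S n)) with (L * INR (S n) + K) by (field; lra).
  exact H.
Qed.

Lemma longrun_ge_of_occupation L K :
  (forall o N, occupation_constraints (vec X) (vec Y) o N -> L * N + K <= dot4 o (SX Rr Pp)) ->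
  L <= longrun Rr Pp X Y.
Proof.
  intro Hbound; apply (real_Lim_seq_ge_plus_div_S _ 0 1 L K cesaro_bounds); intro n.
  assert (HN : 0 < INR (S n)) by (apply lt_0_INR; lia).
  pose proof (Hbound _ _ (occupation_constraints_hold _ _ (init X) (init Y) n HX HY)) as H.
  rewrite <- cesaro_occupation in H.
  apply Rmult_le_reg_r with (INR (S n)); [exact HN|].
  replace ((L + K / INR (S n)) * INR (S n)) with (L * INR (S n) + K) by (field; lra).
  exact H.
Qed.

End Longrun.

Lemma Rle_div_of_mul_le x y z : 0 < y -> x * y <= z -> x <= z / y.
Proof. intros Hy H; apply Rmult_le_reg_r with y; [exact Hy|]; field_simplify; lra. Qed.

Lemma occupation_dd_le p q o N :
  occupation_constraints p q o N -> q DD = 0 -> (1 + p DD) * o DD <= N + 1.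
Proof.
  intros (Ho & Hs & _ & _ & Hflow) Hq4.
  pose proof (Hflow DD CD) as H; unfold trans in H; cbn in H; rewrite Hq4 in H.
  pose proof (Ho CC); pose proof (Ho DC); unfold sum4 in Hs; lra.
Qed.

Lemma longrun_self_ge_punishment Rr Pp X :
  PD_params Rr Pp -> valid_mem1 (vec X) ->
  vec X CD < 1 -> vec X DC = 0 -> vec X DD = 0 ->
  Pp <= longrun Rr Pp X X.
Proof.
  intros HPD Hv Hp2 Hp3 Hp4; pose proof HPD as (P1 & P2 & P3 & P4).
  apply (longrun_ge_of_occupation Rr Pp X X HPD Hv Hv Pp (- (Pp / (1 - vec X CD)))).
  intros o N (Ho & Hs & Hown & _).
  apply Rabs_le_between in Hown; unfold dot4, sum4 in *; cbn in Hown |- *.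
  rewrite Hp3, Hp4 in Hown.
  pose proof (Ho CC); pose proof (Ho CD); pose proof (Ho DC); pose proof (Hv CC).
  assert (Hb : o CD <= 1 / (1 - vec X CD)) by (apply Rle_div_of_mul_le; nra).
  assert (Pp * o CD <= Pp / (1 - vec X CD))
    by (replace (Pp / (1 - vec X CD)) with (Pp * (1 / (1 - vec X CD))) by (field; lra);
        apply Rmult_le_compat_l; lra).
  nra.
Qed.

Lemma longrun_nonfirm_lt_punishment Rr Pp X Y :
  PD_params Rr Pp -> valid_mem1 (vec X) -> valid_mem1 (vec Y) ->
  vec Y CD < 1 -> vec Y DC = 0 -> vec Y DD = 0 ->
  (vec Y CC < 1 \/ vec X CC < 1) -> 0 < vec X DD ->
  longrun Rr Pp X Y < Pp.
Proof.
  intros HPD HvX HvY Hq2 Hq3 Hq4 Hagree Hp4; pose proof HPD as (P1 & P2 & P3 & P4).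
  set (C := 1 / (1 - vec Y CD)).
  assert (Hc : forall o N, occupation_constraints (vec X) (vec Y) o N -> o DC <= C).
  { intros o N (Ho & _ & _ & Hother & _).
    apply Rabs_le_between in Hother; unfold dot4, sum4 in Hother; cbn in Hother.
    rewrite Hq3, Hq4 in Hother; pose proof (Ho CC); pose proof (HvY CC).
    apply Rle_div_of_mul_le; nra. }
  assert (Ha : exists A, forall o N,
             occupation_constraints (vec X) (vec Y) o N -> o CC <= A).
  { destruct (HvY CC) as [_ [Hq1 | Hq1]].
    - exists (1 / (1 - vec Y CC)); intros o N (Ho & _ & _ & Hother & _).
      apply Rabs_le_between in Hother; unfold dot4, sum4 in Hother; cbn in Hother.
      rewrite Hq3, Hq4 in Hother; pose proof (Ho DC).
      apply Rle_div_of_mul_le; nra.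
    - destruct Hagree as [? | Hp1]; [lra|].
      exists ((C + 1) / (1 - vec X CC)); intros o N Hcons.
      pose proof (Hc o N Hcons); destruct Hcons as (_ & _ & _ & _ & Hflow).
      pose proof (Hflow CC DC) as Hcd; unfold trans in Hcd; cbn in Hcd; rewrite Hq1 in Hcd.
      apply Rle_div_of_mul_le; lra. }
  destruct Ha as [A Ha].
  set (L := Pp / (1 + vec X DD)).
  assert (HL : L * (1 + vec X DD) = Pp) by (unfold L; field; lra).
  assert (HL0 : 0 < L) by (unfold L; apply Rdiv_lt_0_compat; lra).
  apply Rle_lt_trans with L.
  - apply (longrun_le_of_occupation Rr Pp X Y HPD HvX HvY L (Rr * A + C + Pp)).
    intros o N Hcons.
    pose proof (Ha o N Hcons); pose proof (Hc o N Hcons).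
    pose proof (occupation_dd_le _ _ _ _ Hcons Hq4) as Hd.
    destruct Hcons as (Ho & _).
    assert (Pp * o DD <= L * (N + 1))
      by (rewrite <- HL, Rmult_assoc; apply Rmult_le_compat_l; lra).
    assert (L <= Pp) by nra.
    unfold dot4, sum4; cbn; nra.
  - apply Rlt_div_l; nra.
Qed.

Lemma dot4_press_dyson Rr Pp p al be ga de o :
  PD_decomp Rr Pp p al be ga de ->
  dot4 o (fun s => p s - coop_ind (own_play s))
  = al * dot4 o (SX Rr Pp) + be * dot4 o (SY Rr Pp) + ga * sum4 o + de * dot4 o e23.
Proof.
  intro HD.
  assert (E : forall s, p s - coop_ind (own_play s)
                        = al * SX Rr Pp s + be * SY Rr Pp s + ga * one4 s + de * e23 s)
    by (intros []; apply HD).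
  unfold dot4, sum4; rewrite !E; unfold one4; ring.
Qed.

Lemma dot4_press_dyson_swap Rr Pp p al be ga de o :
  PD_decomp Rr Pp p al be ga de ->
  dot4 o (fun s => p (swap s) - coop_ind (other_play s))
  = al * dot4 o (SY Rr Pp) + be * dot4 o (SX Rr Pp) + ga * sum4 o + de * dot4 o e23.
Proof.
  intro HD.
  assert (E : forall s, p (swap s) - coop_ind (other_play s)
                        = al * SY Rr Pp s + be * SX Rr Pp s + ga * one4 s + de * e23 s)
    by (intros []; [exact (HD CC) | exact (HD DC) | exact (HD CD) | exact (HD DD)]).
  unfold dot4, sum4; rewrite !E; unfold one4; ring.
Qed.

Lemma firm_ZD_coeffs Rr Pp p :
  PD_params Rr Pp -> Pp < 1 / 2 -> valid_mem1 p -> firm p ->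
  nonexc_ZD_neg_alphabar Rr Pp p ->
  exists al be, al < 0 /\ al + be < 0 /\ 0 < al - be /\
                PD_decomp Rr Pp p al be (- (al + be) * Pp) 0.
Proof.
  intros (P1 & P2 & P3 & P4) Hhalf Hv Hfirm (al & be & ga & HD & Hga & Hbar).
  pose proof (HD DD) as E4; pose proof (HD DC) as E3; cbn in E3, E4; unfold one4 in E3, E4.
  unfold firm in Hfirm; rewrite Hfirm in E4.
  assert (Hal : al < 0).
  { replace al with (al / ga * ga) by (field; lra); apply Rmult_neg_pos; lra. }
  assert (Hga' : ga = - (al + be) * Pp) by lra; subst ga.
  pose proof (Hv DC).
  exists al, be; repeat split; [lra | nra | nra | exact HD].
Qed.

Lemma longrun_ZD_self_ge_punishment Rr Pp X :
  PD_params Rr Pp -> Pp < 1 / 2 -> valid_mem1 (vec X) -> firm (vec X) ->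
  nonexc_ZD_neg_alphabar Rr Pp (vec X) ->
  Pp <= longrun Rr Pp X X.
Proof.
  intros HPD Hhalf Hv Hfirm Hzd.
  destruct (firm_ZD_coeffs Rr Pp _ HPD Hhalf Hv Hfirm Hzd) as (al & be & Hal & Hs & Hm & HD).
  apply (longrun_ge_of_occupation Rr Pp X X HPD Hv Hv Pp
           (- (1 / (- (al + be)) + 1 / (al - be)))).
  intros o N (_ & Hsum & Hown & Hother & _).
  rewrite (dot4_press_dyson _ _ _ _ _ _ _ _ HD), Hsum in Hown.
  rewrite (dot4_press_dyson_swap _ _ _ _ _ _ _ _ HD), Hsum in Hother.
  set (u := dot4 o (SX Rr Pp) - Pp * N) in *.
  set (v := dot4 o (SY Rr Pp) - Pp * N) in *.
  replace (al * dot4 o (SX Rr Pp) + be * dot4 o (SY Rr Pp) + - (al + be) * Pp * N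
           + 0 * dot4 o e23) with (al * u + be * v) in Hown by (unfold u, v; ring).
  replace (al * dot4 o (SY Rr Pp) + be * dot4 o (SX Rr Pp) + - (al + be) * Pp * N
           + 0 * dot4 o e23) with (al * v + be * u) in Hother by (unfold u, v; ring).
  apply Rabs_le_between in Hown; apply Rabs_le_between in Hother.
  (* Adding and subtracting the two Press-Dyson constraints bounds u + v and u - v. *)
  assert (Hplus : -2 / (- (al + be)) <= u + v) by (apply Rle_div_l; nra).
  assert (Hminus : -2 / (al - be) <= u - v) by (apply Rle_div_l; nra).
  unfold u in *; unfold Rdiv in *; lra.
Qed.

Lemma longrun_nonfirm_vs_ZD_lt_punishment Rr Pp X Y :
  PD_params Rr Pp -> Pp < 1 / 2 -> valid_mem1 (vec X) -> valid_mem1 (vec Y) ->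
  firm (vec Y) -> nonexc_ZD_neg_alphabar Rr Pp (vec Y) -> 0 < vec X DD ->
  longrun Rr Pp X Y < Pp.
Proof.
  intros HPD Hhalf HvX HvY Hfirm Hzd Hp4; pose proof HPD as (P1 & P2 & P3 & P4).
  destruct (firm_ZD_coeffs Rr Pp _ HPD Hhalf HvY Hfirm Hzd) as (al & be & Hal & Hs & Hm & HD).
  set (kap := - al * (1 - 2 * Pp)).
  set (r := / (1 + vec X DD)); set (i := / (al - be)).
  assert (Hkap : 0 < kap) by (unfold kap; nra).
  assert (Hr : (1 + vec X DD) * r = 1) by (unfold r; field; lra).
  assert (Hr0 : 0 < r) by (unfold r; apply Rinv_0_lt_compat; lra).
  assert (Hi0 : 0 < i) by (unfold i; apply Rinv_0_lt_compat; lra).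
  apply Rle_lt_trans with (Pp - kap * vec X DD * r * i).
  2: { assert (0 < kap * vec X DD * r * i) by (repeat apply Rmult_lt_0_compat; lra); lra. }
  apply (longrun_le_of_occupation Rr Pp X Y HPD HvX HvY _ ((1 + kap * r) * i)).
  intros o N Hcons.
  pose proof (occupation_dd_le _ _ _ _ Hcons Hfirm) as Hd.
  destruct Hcons as (Ho & Hsum & _ & Hother & _).
  rewrite (dot4_press_dyson_swap _ _ _ _ _ _ _ _ HD) in Hother.
  apply Rabs_le_between in Hother.
  (* Every round other than dd pays the two players more than 2P in total
     (2R > 1 > 2P); the resident's Press-Dyson constraint turns that excess into
     a shortfall of X below P. *)
  assert (Hshort : (al - be) * dot4 o (SX Rr Pp)
                   <= (al - be) * Pp * N + 1 - kap * (N - o DD)).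
  { assert (0 <= - al * (2 * Rr - 1) * o CC)
      by (apply Rmult_le_pos; [apply Rmult_le_pos; lra | apply Ho]).
    assert (Hid : (al - be) * (Pp * N - dot4 o (SX Rr Pp))
                  = (al * dot4 o (SY Rr Pp) + be * dot4 o (SX Rr Pp)
                     + - (al + be) * Pp * sum4 o + 0 * dot4 o e23)
                    + kap * (N - o DD) + - al * (2 * Rr - 1) * o CC)
      by (rewrite <- Hsum; unfold kap, dot4, sum4; cbn; ring).
    lra. }
  assert (Hdr : o DD <= (N + 1) * r).
  { replace (o DD) with ((1 + vec X DD) * o DD * r)
      by (rewrite (Rmult_comm _ (o DD)), Rmult_assoc, Hr; ring).
    apply Rmult_le_compat_r; lra. }
  assert (Hexcess : kap * ((1 - r) * N - r) <= kap * (N - o DD))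
    by (apply Rmult_le_compat_l; lra).
  apply Rmult_le_reg_l with (al - be); [lra|].
  replace ((al - be) * ((Pp - kap * vec X DD * r * i) * N + (1 + kap * r) * i))
    with ((al - be) * Pp * N - kap * ((1 - r) * N - r) + 1)
    by (unfold r, i; field; split; lra).
  lra.
Qed.

Lemma nonfirm_DD_pos p : valid_mem1 p -> ~ firm p -> 0 < p DD.
Proof. intros Hv Hf; destruct (Hv DD) as [[H | H] _]; [exact H | now elim Hf]. Qed.

Lemma nonagreeable_CC_lt_1 p : valid_mem1 p -> ~ agreeable p -> p CC < 1.
Proof. intros Hv Ha; destruct (Hv CC) as [_ [H | H]]; [exact H | now elim Ha]. Qed.

Theorem theorem4p9 (Rr Pp : R) (hPD : PD_params Rr Pp) :
  (* (a) *)
  (forall (I : Type) (st : I -> strategy) (istar : I) (p1 p2 : R),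
     finite_index I ->
     (forall i, valid_mem1 (vec (st i))) ->
     vec (st istar) CC = p1 -> vec (st istar) CD = p2 ->
     vec (st istar) DC = 0 -> vec (st istar) DD = 0 ->
     p1 < 1 -> p2 < 1 ->
     (forall j, j <> istar -> ~ firm (vec (st j))) ->
     ESS (Amat Rr Pp st) istar)
  /\
  (* (b) *)
  (forall (I : Type) (st : I -> strategy) (istar : I) (p2 : R),
     finite_index I ->
     (forall i, valid_mem1 (vec (st i))) ->
     vec (st istar) CC = 1 -> vec (st istar) CD = p2 ->
     vec (st istar) DC = 0 -> vec (st istar) DD = 0 ->
     p2 < 1 ->
     (forall j, j <> istar -> ~ agreeable (vec (st j)) /\ ~ firm (vec (st j))) ->
     ESS (Amat Rr Pp st) istar)
  /\
  (* (c) *)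
  (Pp < 1 / 2 ->
   forall (I : Type) (st : I -> strategy) (istar : I),
     finite_index I ->
     (forall i, valid_mem1 (vec (st i))) ->
     firm (vec (st istar)) ->
     nonexc_ZD_neg_alphabar Rr Pp (vec (st istar)) ->
     (forall j, j <> istar -> ~ firm (vec (st j))) ->
     ESS (Amat Rr Pp st) istar).
Proof.
  split; [|split].
  - intros I st istar p1 p2 _ Hv <- <- H3 H4 Hp1 Hp2 Hnf j Hj.
    apply Rlt_le_trans with Pp.
    + apply longrun_nonfirm_lt_punishment; auto.
      apply nonfirm_DD_pos; auto.
    + apply longrun_self_ge_punishment; auto.
  - intros I st istar p2 _ Hv H1 <- H3 H4 Hp2 Hnf j Hj.
    destruct (Hnf j Hj) as [Hna Hnf'].
    apply Rlt_le_trans with Pp.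
    + apply longrun_nonfirm_lt_punishment; auto.
      * right; apply nonagreeable_CC_lt_1; auto.
      * apply nonfirm_DD_pos; auto.
    + apply longrun_self_ge_punishment; auto.
  - intros Hhalf I st istar _ Hv Hfirm Hzd Hnf j Hj.
    apply Rlt_le_trans with Pp.
    + apply longrun_nonfirm_vs_ZD_lt_punishment; auto.
      apply nonfirm_DD_pos; auto.
    + apply longrun_ZD_self_ge_punishment; auto.
Qed.
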